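(* Let $\succ=(\succ_s)_{s\in S}$ be a priority profile with every $\succ_s$ a partial order on $I$, and let $\mu_1,\dots,\mu_K$ ($K\ge1$) be stable matchings for $\succ$ such that $\mu_{k'}$ Pareto dominates $\mu_k$ for all $1\le k<k'\le K$. For each $k$ and $s\in S$ let $A_s^k=\{(i,j)\in I\times I:\ \mu_k(i)=s\ \text{and}\ sP_j\mu_k(j)\}$, and let $\succ'_s=\succ_s\cup\bigcup_{k=1}^K A_s^k$. Then for every $s\in S$, $\succ'_s$ is asymmetric and acyclic.
   Context: A binary relation $B$ on $X$ is asymmetric if $(x,y)\in B$ implies $(y,x)\notin B$; transitive if $(x,y),(y,z)\in B$ imply $(x,z)\in B$; acyclic if for all $K\ge2$ and $x_0,\dots,x_K\in X$, [$(x_{k-1},x_k)\in B$ and $(x_k,x_{k-1})\notin B$ for all $k$] implies $(x_K,x_0)\notin B$. A partial order is an asymmetric transitive relation. School choice setup: $I$ is a finite set of students with $|I|\ge 3$, $S$ a finite set of schools. Each student $i$ has a total order $P_i$ on $S\cup\{\emptyset\}$; $sR_is'$ means $sP_is'$ or $s=s'$. Each school $s$ has capacity $q_s\in\mathbb{Z}_{++}$ and an asymmetric priority relation $\succ_s$ on $I$. A matching $\mu$ assigns each $i$ to $\mu(i)\in S\cup\{\emptyset\}$, $\mu(s)=\{i:\mu(i)=s\}$, $|\mu(s)|\le q_s$. $\mu$ is stable for $\succ$ if it is individually rational ($\mu(i)R_i\emptyset$ for all $i$), non-wasteful ($sP_i\mu(i)$ implies $|\mu(s)|=q_s$) and fair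 (no $s$, $j\in\mu(s)$, $i\notin\mu(s)$ with $sR_i\mu(i)$ and $(i,j)\in\succ_s$). $\mu$ is Pareto dominated by $\mu'$ if $\mu'(i)R_i\mu(i)$ for all $i$ and $\mu'(i)P_i\mu(i)$ for some $i$. *)

From mathcomp Require Import all_boot.
Set Implicit Arguments. Unset Strict Implicit. Unset Printing Implicit Defensive.

Definition asymmetric (X : Type) (B : rel X) : Prop :=
  forall x y, B x y -> ~~ B y x.
Definition transitive_rel (X : Type) (B : rel X) : Prop :=
  forall x y z, B x y -> B y z -> B x z.
Definition acyclic (X : Type) (B : rel X) : Prop :=
  forall (K : nat) (x : nat -> X), 2 <= K ->
    (forall k, 1 <= k <= K -> B (x k.-1) (x k) && ~~ B (x k) (x k.-1)) ->
    ~~ B (x K) (x 0).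
Definition partial_order (X : Type) (B : rel X) : Prop :=
  asymmetric B /\ transitive_rel B.

(* Outcomes: [Some s] = school s, [None] = the outside option (emptyset). *)
Definition strict_total_order (X : eqType) (P : rel X) : Prop :=
  irreflexive P /\ transitive_rel P /\ (forall x y, x != y -> P x y || P y x).

Section SchoolChoice.
Variables (I S : finType).
Variable P : I -> rel (option S).
Variable q : S -> nat.

Definition R (i : I) (a b : option S) : bool := P i a b || (a == b).

Definition assigned (mu : I -> option S) (s : S) : {set I} :=
  [set i | mu i == Some s].

Definition is_matching (mu : I -> option S) : Prop :=
  forall s, #|assigned mu s| <= q s.

Definition individually_rational (mu : I -> option S) : Prop :=
  forall i, R i (mu i) None.

Definition non_wasteful (mu : I -> option S) : Prop :=
  forall i s, P i (Some s) (mu i) -> #|assigned mu s| = q s.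

Definition fair (prio : S -> rel I) (mu : I -> option S) : Prop :=
  ~ (exists s i j, [/\ j \in assigned mu s, i \notin assigned mu s,
                       R i (Some s) (mu i) & prio s i j]).

Definition stable (prio : S -> rel I) (mu : I -> option S) : Prop :=
  [/\ is_matching mu, individually_rational mu, non_wasteful mu & fair prio mu].

Definition pareto_dominated (mu mu' : I -> option S) : Prop :=
  (forall i, R i (mu' i) (mu i)) /\ (exists i, P i (mu' i) (mu i)).

Definition A_rel (mu : I -> option S) (s : S) : rel I :=
  fun i j => (mu i == Some s) && P j (Some s) (mu j).

Definition extended_priority (K : nat) (prio : S -> rel I)
    (mus : 'I_K -> I -> option S) (s : S) : rel I :=
  fun i j => prio s i j || [exists k : 'I_K, A_rel (mus k) s i j].

End SchoolChoice.

From mathcomp Require Import all_boot.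

(* Fix a school s.  We rank every student v by a natural number
   [potential v] and show that the extended priority succ'_s is contained in
   the lexicographic order "smaller potential first, ties broken by succ_s".
   That order is irreflexive and transitive, and any relation contained in
   such an order is asymmetric and acyclic.

   The potential is built in two steps.  [demand v] is one plus the last
   round k in which v strictly prefers s to mu_k(v); since the matchings
   improve along the Pareto chain, v weakly prefers mu_k(v) to s exactly
   from round [demand v] on.  [potential v] is the largest demand among v
   and the students of higher s-priority than v, so it grows along succ_s.
   A pair (i, j) of A_s^k has potential i <= k < demand j <= potential j:
   the first inequality holds because, by fairness of mu_k, no student of
   higher priority than i (who is admitted to s) strictly prefers s. *)

Set Implicit Arguments.
Unset Strict Implicit.
Unset Printing Implicit Defensive.

Lemma asymmetric_irreflexive (X : Type) (B : rel X) : asymmetric B -> irreflexive B.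
Proof. by move=> B_asym x; apply/negP => Bxx; move: (B_asym _ _ Bxx); rewrite Bxx. Qed.

Section StrictOrderBound.
Variables (X : Type) (B C : rel X).
Hypotheses (C_irr : irreflexive C) (C_trans : transitive_rel C).
Hypothesis (subBC : forall x y, B x y -> C x y).

Lemma subrel_strict_asymmetric : asymmetric B.
Proof.
move=> x y Bxy; apply/negP => /subBC Cyx.
by have := C_trans (subBC Bxy) Cyx; rewrite C_irr.
Qed.

Lemma subrel_strict_acyclic : acyclic B.
Proof.
move=> n x n_ge2 chain; apply/negP => /subBC C_back.
have C_chain m : 1 <= m <= n -> C (x 0) (x m).
  elim: m => // m IH /andP[_ lt_mn].
  have edge := subBC (andP (chain m.+1 lt_mn)).1.
  case: m IH lt_mn edge => [|m] IH lt_mn edge //.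
  exact: C_trans (IH (ltnW lt_mn)) edge.
have le1n : 1 <= n <= n by rewrite leqnn (leq_trans _ n_ge2).
by have := C_trans (C_chain n le1n) C_back; rewrite C_irr.
Qed.

End StrictOrderBound.

Definition lex_rank (X : Type) (h : X -> nat) (B : rel X) : rel X :=
  fun a b => (h a < h b) || ((h a == h b) && B a b).

Section LexRank.
Variables (X : Type) (h : X -> nat) (B : rel X).

Lemma lex_rank_irr : irreflexive B -> irreflexive (lex_rank h B).
Proof. by move=> B_irr a; rewrite /lex_rank ltnn eqxx B_irr. Qed.

Lemma lex_rank_trans : transitive_rel B -> transitive_rel (lex_rank h B).
Proof.
rewrite /lex_rank => B_tr a b c.
case/orP=> [lt_ab | /andP[/eqP-> Bab]]; case/orP=> [lt_bc | /andP[/eqP<- Bbc]].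
- by rewrite (ltn_trans lt_ab lt_bc).
- by rewrite lt_ab.
- by rewrite lt_bc.
- by rewrite eqxx (B_tr _ _ _ Bab Bbc) orbT.
Qed.

End LexRank.

Definition up_max (X : finType) (B : rel X) (f : X -> nat) (x : X) : nat :=
  \max_(c | (c == x) || B c x) f c.

Section UpMax.
Variables (X : finType) (B : rel X) (f : X -> nat).

Lemma up_max_ge x : f x <= up_max B f x.
Proof. by apply: leq_bigmax_cond; rewrite eqxx. Qed.

(* For a transitive B, every B-predecessor of a is one of b when B a b. *)
Lemma up_max_mono : transitive_rel B ->
  forall a b, B a b -> up_max B f a <= up_max B f b.
Proof.
move=> B_tr a b Bab; apply/bigmax_leqP => c /orP[/eqP-> | Bca].
  by apply: leq_bigmax_cond; rewrite Bab orbT.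
by apply: leq_bigmax_cond; rewrite (B_tr _ _ _ Bca Bab) orbT.
Qed.

Lemma up_max_le x n :
  (forall c, (c == x) || B c x -> f c <= n) -> up_max B f x <= n.
Proof. by move=> le_n; apply/bigmax_leqP. Qed.

End UpMax.

Section StrictPreferences.
Variables (I S : finType) (P : I -> rel (option S)).
Hypothesis P_order : forall i, strict_total_order (P i).

Lemma R_refl i x : R P i x x.
Proof. by rewrite /R eqxx orbT. Qed.

Lemma R_trans i x y z : R P i x y -> R P i y z -> R P i x z.
Proof.
case: (P_order i) => _ [P_tr _].
rewrite /R => /orP[Pxy | /eqP->] /orP[Pyz | /eqP<-]; rewrite ?Pxy ?Pyz ?eqxx ?orbT //.
by rewrite (P_tr _ _ _ Pxy Pyz).
Qed.

Lemma P_notR i x y : P i x y -> ~~ R P i y x.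
Proof.
case: (P_order i) => P_irr [P_tr _] Pxy.
apply/negP => /orP[Pyx | /eqP E]; last by move: Pxy; rewrite E P_irr.
by have := P_tr _ _ _ Pxy Pyx; rewrite P_irr.
Qed.

Lemma notR_P i x y : ~~ R P i x y -> P i y x.
Proof.
case: (P_order i) => _ [_ P_tot]; rewrite /R negb_or => /andP[nPxy neq_xy].
by move: (P_tot _ _ neq_xy); rewrite (negbTE nPxy).
Qed.

Lemma fair_higher_priority (prio : S -> rel I) (mu : I -> option S) s a c :
  fair P prio mu -> mu a = Some s -> prio s c a -> R P c (mu c) (Some s).
Proof.
move=> mu_fair mu_a prio_ca.
have [-> | neq_cs] := eqVneq (mu c) (Some s); first exact: R_refl.
apply/negPn/negP => /notR_P P_sc; apply: mu_fair; exists s, c, a; split.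
- by rewrite inE mu_a.
- by rewrite inE neq_cs.
- by rewrite /R P_sc.
- exact: prio_ca.
Qed.

End StrictPreferences.

Section ExtendedPriority.
Variables (I S : finType) (P : I -> rel (option S)) (q : S -> nat).
Variables (prio : S -> rel I) (K : nat) (mus : 'I_K -> I -> option S) (s : S).
Hypothesis P_order : forall i, strict_total_order (P i).
Hypothesis prio_order : partial_order (prio s).
Hypothesis mus_stable : forall k, stable P q prio (mus k).
Hypothesis mus_pareto :
  forall k k' : 'I_K, k < k' -> pareto_dominated P (mus k) (mus k').

Lemma chain_improves (k k' : 'I_K) v : k <= k' -> R P v (mus k' v) (mus k v).
Proof.
rewrite leq_eqVlt => /orP[/eqP/val_inj-> | lt_kk']; first exact: R_refl.
by case: (mus_pareto lt_kk').
Qed.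

Definition demand (v : I) : nat :=
  \max_(k : 'I_K | P v (Some s) (mus k v)) k.+1.

Lemma demand_gt v (k : 'I_K) : P v (Some s) (mus k v) -> k < demand v.
Proof. exact: (@leq_bigmax_cond _ _ (fun k : 'I_K => k.+1) k). Qed.

(* Once v weakly prefers her assignment to s, she keeps doing so. *)
Lemma demand_le v (k : 'I_K) : R P v (mus k v) (Some s) -> demand v <= k.
Proof.
move=> R_ks; apply/bigmax_leqP => k' P_sk'; rewrite ltnNge; apply/negP => le_kk'.
have R_k's := R_trans P_order (chain_improves v le_kk') R_ks.
by move: R_k's; rewrite (negbTE (P_notR P_order P_sk')).
Qed.

Definition potential : I -> nat := up_max (prio s) demand.

Lemma A_rel_potential (k : 'I_K) a b :
  A_rel P (mus k) s a b -> potential a < potential b.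
Proof.
case/andP => /eqP mu_a P_sb.
have le_ak : potential a <= k.
  apply: up_max_le => c /orP[/eqP-> | prio_ca]; apply: demand_le.
    by rewrite mu_a; exact: R_refl.
  by case: (mus_stable k) => _ _ _ fair_k; exact: fair_higher_priority fair_k mu_a prio_ca.
exact: leq_ltn_trans le_ak (leq_trans (demand_gt P_sb) (up_max_ge _ _ _)).
Qed.

Lemma extended_priority_sub a b :
  extended_priority P prio mus s a b -> lex_rank potential (prio s) a b.
Proof.
case: prio_order => _ prio_tr.
case/orP => [prio_ab | /existsP[k A_ab]]; rewrite /lex_rank.
  have := up_max_mono demand prio_tr prio_ab.
  by rewrite leq_eqVlt prio_ab andbT orbC.
by rewrite (A_rel_potential A_ab).
Qed.

End ExtendedPriority.

Theorem lemma2 (I S : finType) (P : I -> rel (option S)) (q : S -> nat)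
  (prio : S -> rel I) (K : nat) (mus : 'I_K -> I -> option S) :
  3 <= #|I| ->
  (forall i, strict_total_order (P i)) ->
  (forall s, 0 < q s) ->
  (forall s, partial_order (prio s)) ->
  0 < K ->
  (forall k, stable P q prio (mus k)) ->
  (forall k k' : 'I_K, k < k' -> pareto_dominated P (mus k) (mus k')) ->
  forall s, asymmetric (extended_priority P prio mus s) /\
            acyclic (extended_priority P prio mus s).
Proof.
move=> _ P_order _ prio_order _ mus_stable mus_pareto s.
have [prio_asym prio_tr] := prio_order s.
have prio_irr := asymmetric_irreflexive prio_asym.
have lex_irr := lex_rank_irr (potential P prio mus s) prio_irr.
have lex_tr := @lex_rank_trans _ (potential P prio mus s) _ prio_tr.
have sub := extended_priority_sub P_order (prio_order s) mus_stable mus_pareto.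
split; [exact: subrel_strict_asymmetric lex_irr lex_tr sub
       | exact: subrel_strict_acyclic lex_irr lex_tr sub].
Qed.
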